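(* Let $s>1$ and $n\geq1$ be integers, let $(R_1,M_1),\dots,(R_s,M_s)$ be quasi-local commutative rings, and let $R=R_1\times\cdots\times R_s$. If every proper ideal of $R$ is a weakly $n$-absorbing ideal of $R$, then $M_1^n=M_2^n=\cdots=M_s^n=\{0\}$.
   Context: All rings are commutative with $1\neq0$. A quasi-local ring $(R_i,M_i)$ is a ring with unique maximal ideal $M_i$. A proper ideal $I$ of $R$ is weakly $n$-absorbing if whenever $0\neq a_1\cdots a_{n+1}\in I$ with $a_1,\dots,a_{n+1}\in R$, there are $n$ of the $a_i$'s whose product is in $I$. *)

From HB Require Import structures.
From mathcomp Require Import all_boot all_order all_algebra.
Set Implicit Arguments. Unset Strict Implicit. Unset Printing Implicit Defensive.
Import GRing.Theory.
Local Open Scope ring_scope.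

Section ProdRing.
Variables (s : nat) (R : 'I_s -> comNzRingType).

Definition prodring := {dffun forall i : 'I_s, R i}.
HB.instance Definition _ := Choice.on prodring.

Definition pr_zero : prodring := [ffun i => 0].
Definition pr_one : prodring := [ffun i => 1].
Definition pr_opp (x : prodring) : prodring := [ffun i => - x i].
Definition pr_add (x y : prodring) : prodring := [ffun i => x i + y i].
Definition pr_mul (x y : prodring) : prodring := [ffun i => x i * y i].

Fact pr_addA : associative pr_add.
Proof. by move=> x y z; apply/ffunP=> i; rewrite !ffunE addrA. Qed.
Fact pr_addC : commutative pr_add.
Proof. by move=> x y; apply/ffunP=> i; rewrite !ffunE addrC. Qed.
Fact pr_add0 : left_id pr_zero pr_add.
Proof. by move=> x; apply/ffunP=> i; rewrite !ffunE add0r. Qed.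
Fact pr_addN : left_inverse pr_zero pr_opp pr_add.
Proof. by move=> x; apply/ffunP=> i; rewrite !ffunE addNr. Qed.

HB.instance Definition _ :=
  GRing.isZmodule.Build prodring pr_addA pr_addC pr_add0 pr_addN.

Fact pr_mulA : associative pr_mul.
Proof. by move=> x y z; apply/ffunP=> i; rewrite !ffunE mulrA. Qed.
Fact pr_mulC : commutative pr_mul.
Proof. by move=> x y; apply/ffunP=> i; rewrite !ffunE mulrC. Qed.
Fact pr_mul1 : left_id pr_one pr_mul.
Proof. by move=> x; apply/ffunP=> i; rewrite !ffunE mul1r. Qed.
Fact pr_mulDl : left_distributive pr_mul (@GRing.add prodring).
Proof. by move=> x y z; apply/ffunP=> i; rewrite !ffunE mulrDl. Qed.

HB.instance Definition _ :=
  GRing.Zmodule_isComPzRing.Build prodring pr_mulA pr_mulC pr_mul1 pr_mulDl.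

End ProdRing.

(* Ideals (as arbitrary, not necessarily decidable, subsets).          *)
Section Ideals.
Variable A : comPzRingType.

Definition is_ideal (I : A -> Prop) : Prop :=
  [/\ I 0, (forall x y, I x -> I y -> I (x + y))
    & (forall a x, I x -> I (a * x))].

Definition proper_idl (I : A -> Prop) : Prop := is_ideal I /\ ~ I 1.

Definition maximal_ideal (M : A -> Prop) : Prop :=
  proper_idl M /\
  forall J : A -> Prop, proper_idl J -> (forall x, M x -> J x) ->
    forall x, J x <-> M x.

Definition quasi_local (M : A -> Prop) : Prop :=
  maximal_ideal M /\
  forall N : A -> Prop, maximal_ideal N -> forall x, N x <-> M x.

Definition ideal_pow (M : A -> Prop) (n : nat) : A -> Prop :=
  fun x => exists (k : nat) (a : 'I_k -> 'I_n -> A),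
    (forall i j, M (a i j)) /\ x = \sum_(i < k) \prod_(j < n) a i j.

Definition weakly_n_absorbing (n : nat) (I : A -> Prop) : Prop :=
  proper_idl I /\
  forall a : 'I_n.+1 -> A,
    \prod_(i < n.+1) a i != 0 -> I (\prod_(i < n.+1) a i) ->
    exists j : 'I_n.+1, I (\prod_(i < n.+1 | i != j) a i).

End Ideals.

(* Let m_1, ..., m_n lie in M_i with product c <> 0, and pick k <> i.  Put
   each m_j in coordinate i (1 elsewhere) and add the element that is 0 in
   coordinate k and 1 elsewhere.  Their product is nonzero and lies in the
   proper ideal {y | y_k = 0 and c divides y_i}.  Omitting the last factor
   leaves a k-coordinate 1; omitting m_j leaves d with c = m_j d and d = c r,
   so d (1 - m_j r) = 0.  As R_i is quasi-local, 1 - m_j r is a unit, hence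
   d = 0 and c = 0. *)

From HB Require Import structures.
From mathcomp Require Import all_boot all_order all_algebra.
From mathcomp Require Import boolp classical_sets.
Set Implicit Arguments. Unset Strict Implicit. Unset Printing Implicit Defensive.
Import GRing.Theory.
Local Open Scope ring_scope.

Section ProdringComponents.
Variables (s : nat) (R : 'I_s -> comNzRingType).
Implicit Types (x y : prodring R) (t : 'I_s).

Lemma prodring0E t : (0 : prodring R) t = 0. Proof. by rewrite /= ffunE. Qed.
Lemma prodring1E t : (1 : prodring R) t = 1. Proof. by rewrite /= ffunE. Qed.
Lemma prodringDE x y t : (x + y) t = x t + y t. Proof. by rewrite /= ffunE. Qed.
Lemma prodringME x y t : (x * y) t = x t * y t. Proof. by rewrite /= ffunE. Qed.

Lemma prodring_prodE (I : Type) (r : seq I) (P : pred I) (F : I -> prodring R) t :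
  (\prod_(j <- r | P j) F j) t = \prod_(j <- r | P j) F j t.
Proof.
apply: (big_rec2 (fun (x : prodring R) (y : R t) => x t = y)).
  exact: prodring1E.
by move=> j x y _ <-; rewrite prodringME.
Qed.

Definition prodring_at i (v : R i) : prodring R :=
  [ffun t => @dfwith _ R (fun => 1) i v t].

Lemma prodring_at_in i (v : R i) : prodring_at v i = v.
Proof. by rewrite ffunE dfwith_in. Qed.

Lemma prodring_at_out i t (v : R i) : i != t -> prodring_at v t = 1.
Proof. by move=> it; rewrite ffunE dfwith_out. Qed.

Definition zero_at_dvd_at k i (c : R i) : prodring R -> Prop :=
  fun y => y k = 0 /\ exists r, y i = c * r.

Lemma proper_zero_at_dvd_at k i (c : R i) : proper_idl (zero_at_dvd_at k c).
Proof.
split; last by move=> [/eqP]; rewrite prodring1E oner_eq0.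
split.
- by split; rewrite prodring0E //; exists 0; rewrite mulr0.
- move=> u v [uk [r ur]] [vk [r' vr]]; split; first by rewrite prodringDE uk vk addr0.
  by exists (r + r'); rewrite prodringDE ur vr mulrDr.
- move=> b u [uk [r ur]]; split; first by rewrite prodringME uk mulr0.
  by exists (b i * r); rewrite prodringME ur mulrCA.
Qed.

End ProdringComponents.

Section MaximalIdeals.
Variable A : comNzRingType.
Local Open Scope classical_set_scope.

Lemma chain_bigcup_proper_idl (F : set (set A)) :
  (forall X, F X -> X !=set0 -> proper_idl X) -> total_on F subset ->
  \bigcup_(X in F) X !=set0 -> proper_idl (\bigcup_(X in F) X).
Proof.
move=> Fproper Ftot [x0 [X0 FX0 X0x0]].
have idlF X x : F X -> X x -> is_ideal X /\ ~ X 1.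
  by move=> FX Xx; apply: Fproper => //; exists x.
split; last by move=> [X FX X1]; have [_] := idlF X 1 FX X1.
have [[X00 _ _] _] := idlF X0 x0 FX0 X0x0.
split; first by exists X0.
- move=> x y [X FX Xx] [Y FY Yy].
  have [XY|YX] := Ftot _ _ FX FY.
    have [[_ YD _] _] := idlF Y y FY Yy.
    by exists Y => //; apply: YD => //; apply: XY.
  have [[_ XD _] _] := idlF X x FX Xx.
  by exists X => //; apply: XD => //; apply: YX.
- move=> a x [X FX Xx]; have [[_ _ XM] _] := idlF X x FX Xx.
  by exists X => //; apply: XM.
Qed.

Lemma proper_idl_sub_maximal (I : set A) :
  proper_idl I -> exists2 N, maximal_ideal N & I `<=` N.
Proof.
move=> [[I0 ID IM] I1].
pose P X := X !=set0 -> proper_idl X /\ I `<=` X.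
have chainP F : F `<=` P -> total_on F subset -> P (\bigcup_(X in F) X).
  move=> FP Ftot Fne; split.
    by apply: chain_bigcup_proper_idl => // X FX Xne; have [] := FP X FX Xne.
  have [x [X FX Xx]] := Fne; have [_ IX] := FP X FX (ex_intro _ x Xx).
  by move=> y Iy; exists X => //; apply: IX.
have [N [PN Nmax]] := Zorn_bigcup chainP.
have [|Nproper IN] := PN.
  apply: contrapT => N0; apply: (Nmax I); last by move=> _; split=> //; split.
  by split=> [x Nx|IN]; [case: N0; exists x | apply: N0; exists 0; apply: IN].
exists N => //; split=> // J Jproper NJ x; split; last exact: NJ.
move: x; apply: contrapT => JN.
apply: (Nmax J); first by split.
by move=> _; split=> // y Iy; apply/NJ/IN.
Qed.

Lemma quasi_local_unit (M : set A) u :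
  quasi_local M -> ~ M u -> exists y, u * y = 1.
Proof.
move=> [_ Muniq] Mu; apply: contrapT => u_nonunit.
pose uA y := exists r, y = u * r.
have uA_proper : proper_idl uA.
  split; last by move=> [y /esym u1]; apply: u_nonunit; exists y.
  split; first by exists 0; rewrite mulr0.
    by move=> _ _ [r ->] [r' ->]; exists (r + r'); rewrite mulrDr.
  by move=> a _ [r ->]; exists (a * r); rewrite mulrCA.
have [N Nmax uAN] := proper_idl_sub_maximal uA_proper.
by apply/Mu/(Muniq N Nmax)/uAN; exists 1; rewrite mulr1.
Qed.

Lemma quasi_local_fixed_by_mul_eq0 (M : set A) m r d :
  quasi_local M -> M m -> d = m * r * d -> d = 0.
Proof.
move=> ql Mm dE; have [[[[_ MD MM] M1] _] _] := ql.
have [y y_inv] : exists y, (1 - m * r) * y = 1.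
  apply: (quasi_local_unit ql) => M1Bmr; apply: M1.
  by have := MD _ _ M1Bmr (MM r _ Mm); rewrite mulrC subrK.
have annihilated : (1 - m * r) * d = 0 by rewrite mulrBl mul1r -dE subrr.
by rewrite -[d]mul1r -y_inv mulrAC annihilated mul0r.
Qed.

End MaximalIdeals.

Section WeaklyAbsorbingProduct.
Variables (s : nat) (R : 'I_s -> comNzRingType).

Lemma weakly_absorbing_prod_eq0 n i k (M : R i -> Prop) (m : 'I_n -> R i) :
  i != k -> quasi_local M -> (forall j, M (m j)) ->
  weakly_n_absorbing n (zero_at_dvd_at k (\prod_(j < n) m j)) ->
  \prod_(j < n) m j = 0.
Proof.
move=> ik ql Mm [_ absorbs]; set c := \prod_(j < n) m j.
apply/eqP; apply: contraT => c_neq0.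
pose a j : prodring R :=
  if unlift ord_max j is Some j' then prodring_at (m j') else prodring_at (0 : R k).
have a_lift j : a (lift ord_max j) = prodring_at (m j) by rewrite /a liftK.
have a_max : a ord_max = prodring_at (0 : R k) by rewrite /a unlift_none.
pose P := \prod_(j < n.+1) a j.
have P_split : P = prodring_at (0 : R k) * \prod_(j < n) prodring_at (m j).
  rewrite /P (bigD1_ord ord_max) //= a_max; congr (_ * _).
  by apply: eq_bigr => j _; apply: a_lift.
have Pi : P i = c.
  rewrite P_split prodringME prodring_at_out 1?eq_sym // prodring_prodE mul1r.
  by apply: eq_bigr => j _; rewrite prodring_at_in.
have Pk : P k = 0 by rewrite P_split prodringME prodring_at_in mul0r.
have P_neq0 : P != 0 by apply: contraNneq c_neq0 => P0; rewrite -Pi P0 prodring0E.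
have P_in : zero_at_dvd_at k c P by split=> //; exists 1; rewrite Pi mulr1.
have [j absorbed] := absorbs a P_neq0 P_in.
case: (unliftP ord_max j) => [j'|] -> in absorbed *.
- have [_ [r Qi]] := absorbed.
  set Q := \prod_(t < n.+1 | t != lift ord_max j') a t in Qi *.
  have cE : c = m j' * Q i.
    by rewrite -Pi /P (bigD1 (lift ord_max j')) //= prodringME a_lift prodring_at_in.
  move: c_neq0; rewrite cE (quasi_local_fixed_by_mul_eq0 ql (Mm j') (r := r) (d := Q i)).
    by rewrite mulr0 eqxx.
  by rewrite {1}Qi -/c {1}cE mulrAC.
- move: absorbed => [/eqP]; rewrite prodring_prodE big1 ?oner_eq0 // => t.
  by case: (unliftP ord_max t) => [t'|] ->; rewrite ?eqxx // a_lift prodring_at_out.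
Qed.

End WeaklyAbsorbingProduct.

Theorem mainTheorem9 (s n : nat) (R : 'I_s -> comNzRingType)
    (M : forall i : 'I_s, R i -> Prop) :
  (1 < s)%N -> (1 <= n)%N ->
  (forall i, quasi_local (M i)) ->
  (forall I : prodring R -> Prop, proper_idl I -> weakly_n_absorbing n I) ->
  forall i : 'I_s, forall x : R i, ideal_pow (M i) n x <-> x = 0.
Proof.
move=> s_gt1 _ ql absorbing i x; split=> [[k [a [Ma ->]]]|->]; last first.
  by exists 0%N, (fun _ _ => 0); split; [case | rewrite big_ord0].
have [j ij] : exists j : 'I_s, i != j.
  have s_gt0 := ltnW s_gt1.
  case: (eqVneq i (Ordinal s_gt0)) => [->|]; last by exists (Ordinal s_gt0).
  by exists (Ordinal s_gt1).
apply: big1 => t _; apply: (weakly_absorbing_prod_eq0 ij (ql i)) => //.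
exact/absorbing/proper_zero_at_dvd_at.
Qed.
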